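(* Let $\Sigma$ be a signature and $\mathbf V$ a full subcategory of $\mathbf{Alg}(\Sigma)$. Then $\mathbf V$ is closed under surjective images, small products and strong subobjects if and only if there exist a set $X$ and an unconditional theory $\Lambda$ in the language $(\Sigma,X)$ such that $\mathbf V=\mathbf{Mod}(\Lambda)$.
   Context: $H$ is a frame with bottom $\bot$. An $H$-fuzzy set is a pair $(A,\mu_A)$ of a set $A$ and a function $\mu_A:A\to H$; an arrow $f:(A,\mu_A)\to(B,\mu_B)$ is a function with $\mu_A(x)\le\mu_B(f(x))$; they form $\mathbf{Fuz}_H$. For $n\ge1$, $(A,\mu_A)^n=(A^n,\mu)$ with $\mu(a_1,\dots,a_n)=\bigwedge_i\mu_A(a_i)$. A signature $\Sigma=(O,\mathrm{ar},C)$ consists of a set $O$ of operation symbols with arity $\mathrm{ar}:O\to\{1,2,3,\dots\}$ and a set $C$ of constant symbols. A language is a pair $\mathcal L=(\Sigma,X)$ with $X$ a set of variables. $\mathrm{Terms}(\mathcal L)$ is the smallest set containing $X\sqcup C$ and containing $f(t_1,\dots,t_{\mathrm{ar}(f)})$ whenever $f\in O$ and all $t_i\in\mathrm{Terms}(\mathcal L)$. A formula is either an equation $s\equiv t$ ($s,t$ terms) or a membership proposition $\mathsf E_l(t)$ with $l\in H$ and $t$ a term. A sequent $\Gamma\vdash\psi$ is a pair of a (possibly infinite) set $\Gamma$ of formulas and a formula $\psi$; $\vdash\psi$ means $\emptyset\vdash\psi$. A fuzzy theory in $\mathcal L$ is a set of sequents. A theory is unconditional if all its sequents have the form $\vdash\phi$.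 A $\Sigma$-algebra $\mathcal A=((A,\mu_A),\Sigma^{\mathcal A})$ is an $H$-fuzzy set $(A,\mu_A)$ together with, for each $f\in O$, an arrow $f^{\mathcal A}:(A,\mu_A)^{\mathrm{ar}(f)}\to(A,\mu_A)$ of $\mathbf{Fuz}_H$ and, for each $c\in C$, an element $c^{\mathcal A}\in A$. A morphism of $\Sigma$-algebras is an arrow of $\mathbf{Fuz}_H$ between the carriers preserving all constants and commuting with all operations; this gives $\mathbf{Alg}(\Sigma)$, whose products are the products of carriers in $\mathbf{Fuz}_H$ (membership the infimum of the components) with componentwise operations and constants. An assignment is a function $\iota:X\to A$; evaluation: $x^{\mathcal A,\iota}=\iota(x)$, $c^{\mathcal A,\iota}=c^{\mathcal A}$, $f(t_1,\dots,t_n)^{\mathcal A,\iota}=f^{\mathcal A}(t_1^{\mathcal A,\iota},\dots,t_n^{\mathcal A,\iota})$. $\mathcal A\vDash_\iota s\equiv t$ iff $s^{\mathcal A,\iota}=t^{\mathcal A,\iota}$; $\mathcal A\vDash_\iota\mathsf E_l(t)$ iff $l\le\mu_A(t^{\mathcal A,\iota})$. $\mathcal A$ satisfies $\Gamma\vdash\psi$ if for every assignment $\iota$ with $\mathcal A\vDash_\iota\phi$ for all $\phi\in\Gamma$ one has $\mathcal A\vDash_\iota\psi$. $\mathcal A$ is a model of a theory $\Lambda$ if it satisfies every sequent of $\Lambda$; $\mathbf{Mod}(\Lambda)$ is the full subcategory of $\mathbf{Alg}(\Sigma)$ on the models of $\Lambda$. Closure conditions on $\mathbf V$: closed under surjective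 images means that if $\mathcal A\in\mathbf V$ and $e:\mathcal A\to\mathcal B$ is a morphism with surjective underlying function then $\mathcal B\in\mathbf V$; closed under strong subobjects means that if $\mathcal B\in\mathbf V$ and $m:\mathcal A\to\mathcal B$ is a morphism whose underlying function is injective with $\mu_B(m(a))=\mu_A(a)$ for all $a$, then $\mathcal A\in\mathbf V$; closed under small products means the product of any set-indexed family of members of $\mathbf V$ is in $\mathbf V$. *)

From mathcomp Require Import all_boot.
Set Implicit Arguments.
Unset Strict Implicit.
Unset Printing Implicit Defensive.

Record frame := Frame {
  fcar :> Type;
  fle : fcar -> fcar -> Prop;
  fle_refl : forall x, fle x x;
  fle_trans : forall x y z, fle x y -> fle y z -> fle x z;
  fle_anti : forall x y, fle x y -> fle y x -> x = y;
  fsup : (fcar -> Prop) -> fcar;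
  fsup_ub : forall S x, S x -> fle x (fsup S);
  fsup_least : forall S y, (forall x, S x -> fle x y) -> fle (fsup S) y;
  finf : (fcar -> Prop) -> fcar;
  finf_lb : forall S x, S x -> fle (finf S) x;
  finf_greatest : forall S y, (forall x, S x -> fle y x) -> fle y (finf S);
  (* frame distributive law: a /\ (\/ S) = \/ { a /\ s | s in S } *)
  fmeet_sup : forall a S,
    finf (fun x => x = a \/ x = fsup S) =
    fsup (fun y => exists2 s, S s & y = finf (fun x => x = a \/ x = s))
}.

Definition finfI (H : frame) (I : Type) (f : I -> H) : H :=
  finf (fun x => exists i, x = f i).

Definition fbot (H : frame) : H := fsup (fun _ => False).

Record signature := Signature {
  sig_op : Type;
  sig_ar : sig_op -> nat;
  sig_ar_pos : forall o, 0 < sig_ar o;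
  sig_const : Type
}.

(** * Sigma-algebras on H-fuzzy sets.  [alg_mem] is mu_A; an operation
    f^A : (A, mu_A)^n -> (A, mu_A) takes an n-tuple ('I_n -> A) and must be an
    arrow of Fuz_H: /\_i mu_A(a_i) <= mu_A(f^A(a)). *)
Record algebra (H : frame) (S : signature) := Algebra {
  alg_car :> Type;
  alg_mem : alg_car -> H;
  alg_op : forall o : sig_op S, ('I_(sig_ar o) -> alg_car) -> alg_car;
  alg_op_mem : forall o (a : 'I_(sig_ar o) -> alg_car),
    fle (finfI (fun i => alg_mem (a i))) (alg_mem (alg_op a));
  alg_const : sig_const S -> alg_car
}.

Definition is_morphism (H : frame) (S : signature) (A B : algebra H S)
  (f : A -> B) : Prop :=
  (forall x, fle (alg_mem x) (alg_mem (f x))) /\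
  (forall c, f (alg_const A c) = alg_const B c) /\
  (forall o (a : 'I_(sig_ar o) -> A),
      f (alg_op a) = alg_op (fun i => f (a i))).

Lemma prod_op_mem (H : frame) (S : signature) (I : Type) (A : I -> algebra H S)
  (o : sig_op S) (a : 'I_(sig_ar o) -> forall i, A i) :
  fle (finfI (fun j => finfI (fun i => alg_mem (a j i))))
      (finfI (fun i => alg_mem (alg_op (fun j => a j i)))).
Proof.
apply: finf_greatest => x [i ->].
apply: fle_trans (alg_op_mem (fun j => a j i)).
apply: finf_greatest => y [j ->].
apply: fle_trans (finf_lb (ex_intro _ j erefl)) _.
exact: finf_lb (ex_intro _ i erefl).
Qed.

Definition prod_alg (H : frame) (S : signature) (I : Type)
  (A : I -> algebra H S) : algebra H S :=
  @Algebra H S (forall i, A i)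
    (fun x => finfI (fun i => alg_mem (x i)))
    (fun o a i => alg_op (fun j => a j i))
    (@prod_op_mem H S I A)
    (fun c i => alg_const (A i) c).

Definition closed_surj_images (H : frame) (S : signature)
  (V : algebra H S -> Prop) : Prop :=
  forall (A B : algebra H S) (e : A -> B),
    V A -> is_morphism e -> (forall y, exists x, e x = y) -> V B.

Definition closed_strong_subobjects (H : frame) (S : signature)
  (V : algebra H S -> Prop) : Prop :=
  forall (A B : algebra H S) (m : A -> B),
    V B -> is_morphism m -> injective m ->
    (forall a, alg_mem (m a) = alg_mem a) -> V A.

Definition closed_products (H : frame) (S : signature)
  (V : algebra H S -> Prop) : Prop :=
  forall (I : Type) (A : I -> algebra H S),
    (forall i, V (A i)) -> V (prod_alg A).

Inductive term (S : signature) (X : Type) : Type :=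
  | TVar : X -> term S X
  | TConst : sig_const S -> term S X
  | TApp : forall o : sig_op S, ('I_(sig_ar o) -> term S X) -> term S X.

Inductive formula (H : frame) (S : signature) (X : Type) : Type :=
  | FEq : term S X -> term S X -> formula H S X
  | FMem : H -> term S X -> formula H S X.

Record sequent (H : frame) (S : signature) (X : Type) := Sequent {
  seq_hyps : formula H S X -> Prop;
  seq_concl : formula H S X
}.

Definition theory (H : frame) (S : signature) (X : Type) :=
  sequent H S X -> Prop.

Definition unconditional (H : frame) (S : signature) (X : Type)
  (L : theory H S X) : Prop :=
  forall s, L s -> forall phi, ~ seq_hyps s phi.

Fixpoint eval (H : frame) (S : signature) (X : Type) (A : algebra H S)
  (iota : X -> A) (t : term S X) : A :=
  match t with
  | TVar x => iota x
  | TConst c => alg_const A c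
  | TApp o ts => alg_op (fun j => eval iota (ts j))
  end.

Definition sat (H : frame) (S : signature) (X : Type) (A : algebra H S)
  (iota : X -> A) (phi : formula H S X) : Prop :=
  match phi with
  | FEq s t => eval iota s = eval iota t
  | FMem l t => fle l (alg_mem (eval iota t))
  end.

Definition satisfies_sequent (H : frame) (S : signature) (X : Type)
  (A : algebra H S) (s : sequent H S X) : Prop :=
  forall iota : X -> A,
    (forall phi, seq_hyps s phi -> sat iota phi) -> sat iota (seq_concl s).

Definition is_model (H : frame) (S : signature) (X : Type)
  (L : theory H S X) (A : algebra H S) : Prop :=
  forall s, L s -> satisfies_sequent A s.

(** A class closed under surjective images, products and strong subobjects is
    the class of models of the unconditional formulas it validates.  Given a
    model [A] of these formulas, quotient the term algebra on the elements of
    [A] by the fuzzy congruence of all equations and membership degrees valid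
    in the class.  This quotient is the free algebra of the class on [A]: it is
    a strong subobject of a product of quotients by kernels of assignments into
    members of the class, each of which is a strong subobject of its target.
    Since [A] validates everything the class validates (terms are finitary, so
    countably many variables suffice), evaluation in [A] factors through this
    free algebra, giving a surjective morphism onto [A].  Conversely, the
    validity of an unconditional formula is preserved by all three
    constructions. *)
From Stdlib Require Import Classical IndefiniteDescription.
From Stdlib Require Import FunctionalExtensionality PropExtensionality ProofIrrelevance.
From Stdlib Require List.
From mathcomp Require Import all_boot.
Set Implicit Arguments.
Unset Strict Implicit.
Unset Printing Implicit Defensive.

Section Meets.
Variables (H : frame) (I : Type) (f : I -> H).

Lemma finfI_lb i : fle (finfI f) (f i).
Proof. exact: finf_lb (ex_intro _ i erefl). Qed.

Lemma finfI_glb y : (forall i, fle y (f i)) -> fle y (finfI f).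
Proof. by move=> h; apply: finf_greatest => x [i ->]. Qed.

End Meets.

Section Evaluation.
Variables (H : frame) (S : signature).

Lemma eval_morphism (X : Type) (A B : algebra H S) (f : A -> B) (iota : X -> A) t :
  is_morphism f -> f (eval iota t) = eval (fun x => f (iota x)) t.
Proof.
move=> [_ [f_const f_op]]; elim: t => [x|k|o ts IH] //=.
by rewrite f_op (functional_extensionality _ _ IH).
Qed.

Lemma proj_morphism (I : Type) (A : I -> algebra H S) i :
  is_morphism (fun x : prod_alg A => x i).
Proof. by split; [move=> x; exact: finfI_lb | split]. Qed.

Lemma eval_prod (X : Type) (I : Type) (A : I -> algebra H S)
    (iota : X -> prod_alg A) t :
  eval iota t = fun i => eval (fun x => iota x i) t.
Proof.
apply: functional_extensionality_dep => i.
exact: (eval_morphism iota t (proj_morphism A i)).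
Qed.

Fixpoint rename (X Y : Type) (r : X -> Y) (t : term S X) : term S Y :=
  match t with
  | TVar x => TVar S (r x)
  | TConst k => TConst Y k
  | TApp o ts => TApp (fun j => rename r (ts j))
  end.

Lemma eval_rename (X Y : Type) (A : algebra H S) (r : X -> Y) (iota : Y -> A) t :
  eval iota (rename r t) = eval (fun x => iota (r x)) t.
Proof.
elim: t => [x|k|o ts IH] //=.
by rewrite (functional_extensionality _ _ IH).
Qed.

Fixpoint fvars (X : Type) (t : term S X) : seq X :=
  match t with
  | TVar x => [:: x]
  | TConst _ => [::]
  | TApp o ts => List.flat_map (fun j => fvars (ts j)) (enum 'I_(sig_ar o))
  end.

Lemma mem_In (T : eqType) (x : T) (s : seq T) : x \in s -> List.In x s.
Proof.
by elim: s => [|y s IH] //=; rewrite in_cons => /orP [/eqP ->|/IH]; [left|right].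
Qed.

Lemma eval_agree (X : Type) (A : algebra H S) (iota iota' : X -> A) t :
  (forall x, List.In x (fvars t) -> iota x = iota' x) ->
  eval iota t = eval iota' t.
Proof.
elim: t => [x|k|o ts IH] //= agree; first by apply: agree; left.
congr alg_op; apply: functional_extensionality => j; apply: IH => x x_ts.
by apply/agree/List.in_flat_map; exists j; split; first exact/mem_In/mem_enum.
Qed.

Definition frename (X Y : Type) (r : X -> Y) (phi : formula H S X) : formula H S Y :=
  match phi with
  | FEq s t => FEq H (rename r s) (rename r t)
  | FMem l t => FMem l (rename r t)
  end.

Definition ffvars (X : Type) (phi : formula H S X) : seq X :=
  match phi with
  | FEq s t => fvars s ++ fvars t
  | FMem _ t => fvars t
  end.

Lemma sat_rename (X Y : Type) (A : algebra H S) (r : X -> Y) (iota : Y -> A) phi :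
  sat iota (frename r phi) = sat (fun x => iota (r x)) phi.
Proof. by case: phi => [s t|l t] /=; rewrite !eval_rename. Qed.

Lemma sat_agree (X : Type) (A : algebra H S) (iota iota' : X -> A) phi :
  (forall x, List.In x (ffvars phi) -> iota x = iota' x) ->
  sat iota phi = sat iota' phi.
Proof.
case: phi => [s t|l t] /= agree; last by rewrite (eval_agree agree).
rewrite (@eval_agree _ _ iota iota' s) ?(@eval_agree _ _ iota iota' t) // => x x_st;
  apply: agree; apply: List.in_or_app; by [left|right].
Qed.

Lemma nat_retraction (X : Type) (x0 : X) (vs : seq X) :
  exists r : X -> nat, forall x, List.In x vs -> List.nth (r x) vs x0 = x.
Proof.
apply: (functional_choice (fun x n => List.In x vs -> List.nth n vs x0 = x)) => x.
have [x_vs|x_vs] := classic (List.In x vs); last by exists 0.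
by have [n [_ e]] := List.In_nth vs x x0 x_vs; exists n.
Qed.

End Evaluation.

Section Validity.
Variables (H : frame) (S : signature).

Definition valid (X : Type) (A : algebra H S) (phi : formula H S X) : Prop :=
  forall iota : X -> A, sat iota phi.

Lemma model_unconditionalE (X : Type) (L : theory H S X) (A : algebra H S) :
  unconditional L ->
  is_model L A <-> forall s, L s -> valid A (seq_concl s).
Proof.
move=> uncond; split=> A_L s s_L iota.
- by apply: A_L => // phi /(uncond s s_L).
- by move=> _; exact: A_L.
Qed.

Lemma valid_surj_image (X : Type) (A B : algebra H S) (e : A -> B)
    (phi : formula H S X) :
  is_morphism e -> (forall y, exists x, e x = y) -> valid A phi -> valid B phi.
Proof.
move=> e_morph e_surj A_phi iota.
have [iota' iotaE] :=
  functional_choice (fun x a => e a = iota x) (fun x => e_surj (iota x)).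
move: {A_phi}(A_phi iota'); rewrite -(functional_extensionality _ _ iotaE).
case: phi => [s t|l t] /=; rewrite -!(eval_morphism _ _ e_morph); first by move->.
by move=> /fle_trans; apply; exact: (proj1 e_morph).
Qed.

Lemma valid_prod (X : Type) (I : Type) (A : I -> algebra H S)
    (phi : formula H S X) :
  (forall i, valid (A i) phi) -> valid (prod_alg A) phi.
Proof.
move=> A_phi iota; move: {A_phi}(fun i => A_phi i (fun x => iota x i)).
case: phi => [s t|l t] /= h; rewrite !eval_prod.
- exact: functional_extensionality_dep.
- exact: finfI_glb.
Qed.

Lemma valid_strong_subobject (X : Type) (A B : algebra H S) (m : A -> B)
    (phi : formula H S X) :
  is_morphism m -> injective m -> (forall a, alg_mem (m a) = alg_mem a) ->
  valid B phi -> valid A phi.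
Proof.
move=> m_morph m_inj m_mem B_phi iota; move: {B_phi}(B_phi (fun x => m (iota x))).
by case: phi => [s t|l t] /=; rewrite -!(eval_morphism _ _ m_morph) ?m_mem => // /m_inj.
Qed.

Lemma models_closed (X : Type) (L : theory H S X) :
  unconditional L ->
  [/\ closed_surj_images (is_model L), closed_products (is_model L)
    & closed_strong_subobjects (is_model L)].
Proof.
move=> uncond; split.
- move=> A B e /(model_unconditionalE _ uncond) A_L e_morph e_surj.
  apply/(model_unconditionalE _ uncond) => s /A_L.
  exact: valid_surj_image e_morph e_surj.
- move=> I A A_L; apply/(model_unconditionalE _ uncond) => s s_L.
  by apply: valid_prod => i; apply: (proj1 (model_unconditionalE _ uncond) (A_L i)).
- move=> A B m /(model_unconditionalE _ uncond) B_L m_morph m_inj m_mem.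
  apply/(model_unconditionalE _ uncond) => s /B_L.
  exact: valid_strong_subobject m_morph m_inj m_mem.
Qed.

Lemma valid_of_valid_nat (V : algebra H S -> Prop) (A : algebra H S)
    (X : Type) (x0 : X) (phi : formula H S X) :
  (forall psi : formula H S nat,
      (forall B, V B -> valid B psi) -> valid A psi) ->
  (forall B, V B -> valid B phi) -> valid A phi.
Proof.
move=> A_V V_phi iota.
have [r rK] := nat_retraction x0 (ffvars phi).
have A_phi : valid A (frename r phi).
  by apply: A_V => B V_B iota'; rewrite sat_rename; exact: V_phi.
move: (A_phi (fun n => iota (List.nth n (ffvars phi) x0))).
by rewrite sat_rename (sat_agree (iota' := iota)) // => x /rK ->.
Qed.

End Validity.

Section FuzzyCongruence.
Variables (H : frame) (S : signature) (Y : Type).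

Record fuzzy_congruence := FuzzyCongruence {
  fc_rel : term S Y -> term S Y -> Prop;
  fc_mem : term S Y -> H;
  fc_refl : forall t, fc_rel t t;
  fc_sym : forall s t, fc_rel s t -> fc_rel t s;
  fc_trans : forall s t u, fc_rel s t -> fc_rel t u -> fc_rel s u;
  fc_app : forall o (ts us : 'I_(sig_ar o) -> term S Y),
    (forall j, fc_rel (ts j) (us j)) -> fc_rel (TApp ts) (TApp us);
  fc_mem_rel : forall s t, fc_rel s t -> fc_mem s = fc_mem t;
  fc_mem_app : forall o (ts : 'I_(sig_ar o) -> term S Y),
    fle (finfI (fun j => fc_mem (ts j))) (fc_mem (TApp ts))
}.

Definition is_kernel (c : fuzzy_congruence) (B : algebra H S) (iota : Y -> B) :=
  (forall s t, fc_rel c s t <-> eval iota s = eval iota t) /\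
  (forall t, fc_mem c t = alg_mem (eval iota t)).

Definition kernel_congruence (B : algebra H S) (iota : Y -> B) : fuzzy_congruence.
Proof.
refine (@FuzzyCongruence (fun s t => eval iota s = eval iota t)
                         (fun t => alg_mem (eval iota t)) _ _ _ _ _ _).
- by [].
- by move=> s t ->.
- by move=> s t u ->.
- by move=> o ts us /functional_extensionality /= ->.
- by move=> s t /= ->.
- move=> o ts /=; apply: fle_trans (alg_op_mem _); exact: fle_refl.
Defined.

Lemma kernel_congruenceP (B : algebra H S) (iota : Y -> B) :
  is_kernel (kernel_congruence iota) iota.
Proof. by []. Qed.

Definition meet_congruence (I : Type) (c : I -> fuzzy_congruence) :
  fuzzy_congruence.
Proof.
refine (@FuzzyCongruence (fun s t => forall i, fc_rel (c i) s t)
                         (fun t => finfI (fun i => fc_mem (c i) t)) _ _ _ _ _ _).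
- by move=> t i; exact: fc_refl.
- by move=> s t h i; exact: fc_sym.
- by move=> s t u h1 h2 i; exact: fc_trans (h1 i) (h2 i).
- by move=> o ts us h i; apply: fc_app => j; exact: h.
- move=> s t h; congr finfI; apply: functional_extensionality => i.
  exact: fc_mem_rel.
- move=> o ts; apply: finfI_glb => i; apply: fle_trans (fc_mem_app _ _).
  apply: finfI_glb => j; apply: fle_trans (finfI_lb _ j) _; exact: finfI_lb.
Defined.

End FuzzyCongruence.

Section Quotient.
Variables (H : frame) (S : signature) (Y : Type) (c : fuzzy_congruence H S Y).

(* Classes are represented extensionally, as the predicates [fc_rel c t]. *)
Definition quot_car := {P : term S Y -> Prop | exists t, P = fc_rel c t}.

Definition cls (t : term S Y) : quot_car := exist _ (fc_rel c t) (ex_intro _ t erefl).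

Definition rep (q : quot_car) : term S Y :=
  sval (constructive_indefinite_description _ (svalP q)).

Lemma cls_rep q : cls (rep q) = q.
Proof.
case: q => P P_cls; rewrite /rep /=; case: constructive_indefinite_description.
by move=> t /= P_t; subst P; congr exist; exact: proof_irrelevance.
Qed.

Lemma eq_cls s t : cls s = cls t <-> fc_rel c s t.
Proof.
split=> [/(f_equal sval) /= -> | st]; first exact: fc_refl.
have relE : fc_rel c s = fc_rel c t.
  apply: functional_extensionality => u; apply: propositional_extensionality.
  by split; apply: fc_trans; [exact: fc_sym|].
rewrite /cls; move: (ex_intro _ s _) (ex_intro _ t _); rewrite relE => p q.
by congr exist; exact: proof_irrelevance.
Qed.

Lemma rep_cls t : fc_rel c (rep (cls t)) t.
Proof. by apply/eq_cls; rewrite cls_rep. Qed.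

Lemma quot_op_mem o (qs : 'I_(sig_ar o) -> quot_car) :
  fle (finfI (fun j => fc_mem c (rep (qs j))))
      (fc_mem c (rep (cls (TApp (fun j => rep (qs j)))))).
Proof. rewrite (fc_mem_rel (rep_cls _)); exact: fc_mem_app. Qed.

Definition Quot : algebra H S :=
  @Algebra H S quot_car (fun q => fc_mem c (rep q))
    (fun o qs => cls (TApp (fun j => rep (qs j)))) quot_op_mem
    (fun k => cls (TConst Y k)).

Lemma quot_mem_cls t : alg_mem (cls t : Quot) = fc_mem c t.
Proof. exact: fc_mem_rel (rep_cls t). Qed.

Lemma eval_cls t : eval (fun y => cls (TVar S y) : Quot) t = cls t.
Proof.
elim: t => [y|k|o ts IH] //=.
by apply/eq_cls/fc_app => j; rewrite IH; exact: rep_cls.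
Qed.

Section Lift.
Variables (B : algebra H S) (iota : Y -> B).

Definition quot_lift (q : Quot) : B := eval iota (rep q).

Hypothesis rel_eval : forall s t, fc_rel c s t -> eval iota s = eval iota t.

Lemma quot_lift_cls t : quot_lift (cls t) = eval iota t.
Proof. exact/rel_eval/rep_cls. Qed.

Lemma quot_lift_morphism :
  (forall t, fle (fc_mem c t) (alg_mem (eval iota t))) -> is_morphism quot_lift.
Proof.
move=> mem_eval; split; [move=> q; exact: mem_eval | split].
- by move=> k; rewrite quot_lift_cls.
- by move=> o qs; rewrite quot_lift_cls.
Qed.

Lemma quot_lift_surj :
  (forall b, exists t, eval iota t = b) -> forall b, exists q, quot_lift q = b.
Proof.
by move=> eval_surj b; have [t <-] := eval_surj b; exists (cls t); rewrite quot_lift_cls.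
Qed.

End Lift.

Lemma quot_kernel_strong_subobject (B : algebra H S) (iota : Y -> B) :
  is_kernel c iota ->
  [/\ is_morphism (quot_lift iota), injective (quot_lift iota)
    & forall q, alg_mem (quot_lift iota q) = alg_mem q].
Proof.
move=> [relE memE]; have rel_eval s t := proj1 (relE s t).
split.
- apply: quot_lift_morphism => // t; rewrite memE; exact: fle_refl.
- by move=> q1 q2 /relE /eq_cls; rewrite !cls_rep.
- by move=> q; rewrite /= memE.
Qed.

End Quotient.

Section FreeAlgebra.
Variables (H : frame) (S : signature) (V : algebra H S -> Prop).
Hypothesis V_subobjects : closed_strong_subobjects V.

Lemma quot_kernel_in_class (Y : Type) (c : fuzzy_congruence H S Y)
    (B : algebra H S) (iota : Y -> B) :
  V B -> is_kernel c iota -> V (Quot c).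
Proof.
move=> V_B /quot_kernel_strong_subobject [morph inj mem].
exact: V_subobjects V_B morph inj mem.
Qed.

(* Indexing by kernels rather than by pairs (algebra, assignment) keeps the
   index type in the universe of terms over [Y]. *)
Definition class_kernel (Y : Type) :=
  {c : fuzzy_congruence H S Y | exists (B : algebra H S) (iota : Y -> B),
      V B /\ is_kernel c iota}.

Definition class_congruence (Y : Type) : fuzzy_congruence H S Y :=
  meet_congruence (fun k : class_kernel Y => sval k).

Definition class_kernel_of (Y : Type) (B : algebra H S) (iota : Y -> B)
    (V_B : V B) : class_kernel Y :=
  exist _ (kernel_congruence iota)
    (ex_intro _ B (ex_intro _ iota (conj V_B (kernel_congruenceP iota)))).

Lemma class_congruence_rel (Y : Type) s t :
  fc_rel (class_congruence Y) s t ->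
  forall B, V B -> valid B (FEq H s t).
Proof. by move=> st B V_B iota; exact: st (class_kernel_of iota V_B). Qed.

Lemma class_congruence_mem (Y : Type) t :
  forall B, V B -> valid B (FMem (fc_mem (class_congruence Y) t) t).
Proof. by move=> B V_B iota; exact: finfI_lb (class_kernel_of iota V_B). Qed.

Hypothesis V_products : closed_products V.

Lemma free_algebra_in_class (Y : Type) : V (Quot (class_congruence Y)).
Proof.
pose P := prod_alg (fun k : class_kernel Y => Quot (sval k)).
have V_P : V P.
  apply: V_products => [[c [B [iota [V_B c_ker]]]]].
  exact: quot_kernel_in_class c_ker.
pose iota (y : Y) : P := fun k => cls (sval k) (TVar S y).
have evalE t : eval iota t = fun k => cls (sval k) t.
  by rewrite eval_prod; apply: functional_extensionality_dep => k; exact: eval_cls.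
apply: (quot_kernel_in_class (iota := iota) V_P); split=> [s t | t]; rewrite !evalE.
- split=> [st | /(f_equal (fun f => f _)) st k]; last exact/eq_cls/st.
  by apply: functional_extensionality_dep => k; exact/eq_cls.
- congr finfI; apply: functional_extensionality => k; symmetry.
  exact: quot_mem_cls.
Qed.

Lemma empty_in_class (A : algebra H S) : ~ inhabited A -> V A.
Proof.
move=> A_empty.
have V_P := @V_products False (fun i => match i with end) (fun i => match i with end).
have no_a (a : A) : False := A_empty (inhabits a).
apply: (V_subobjects V_P (m := fun a => False_rect _ (no_a a))).
- split; [|split].
  + by move=> a; case: (no_a a).
  + by move=> k; case: (no_a (alg_const A k)).
  + by move=> o a; case: (no_a (a (Ordinal (sig_ar_pos o)))).
- by move=> a; case: (no_a a).
- by move=> a; case: (no_a a).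
Qed.

Hypothesis V_images : closed_surj_images V.

Lemma in_class_of_valid (A : algebra H S) :
  (forall phi : formula H S nat,
      (forall B, V B -> valid B phi) -> valid A phi) -> V A.
Proof.
move=> A_V; have [[a0]|A_empty] := classic (inhabited A); last exact: empty_in_class.
pose c := class_congruence A.
have rel_eval s t : fc_rel c s t -> eval (fun a : A => a) s = eval id t.
  by move/class_congruence_rel/(valid_of_valid_nat a0 A_V); apply.
apply: (V_images (free_algebra_in_class A) (e := quot_lift (c := c) id)).
- apply: quot_lift_morphism => // t.
  exact: (valid_of_valid_nat a0 A_V (class_congruence_mem t) id).
- by apply: quot_lift_surj => // a; exists (TVar S a).
Qed.

End FreeAlgebra.

Definition valid_theory (H : frame) (S : signature) (V : algebra H S -> Prop) :
  theory H S nat :=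
  fun s => (forall phi, ~ seq_hyps s phi) /\
           forall B, V B -> valid B (seq_concl s).

Theorem corollary59 (H : frame) (S : signature) (V : algebra H S -> Prop) :
  (closed_surj_images V /\ closed_products V /\ closed_strong_subobjects V)
  <->
  (exists (X : Type) (L : theory H S X),
      unconditional L /\ forall A : algebra H S, V A <-> is_model L A).
Proof.
split.
- move=> [V_images [V_products V_subobjects]].
  exists nat, (valid_theory V); split=> [s [] // | A].
  split=> [V_A s [_ V_s] iota _ | A_L]; first exact: V_s.
  apply: (in_class_of_valid V_subobjects V_products V_images) => phi V_phi iota.
  apply: (A_L (Sequent (fun _ => False) phi)) => [|? []].
  by split=> [? []|].
- move=> [X [L [uncond V_L]]].
  have -> : V = is_model L.
    by apply: functional_extensionality => A; exact: propositional_extensionality.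
  by have [] := models_closed uncond.
Qed.
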